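(* For every integer $n>1$, \[ \mathrm{DE3}(n+2)+\mathrm{DE3}(n-1) = \mathrm{DE1}(n)+\mathrm{DE1}(n-1). \]
   Context: For a nonnegative integer $n$, $\mathrm{DE1}(n)$ denotes the number of partitions of $n$ in which no even part is repeated and the largest part is odd, and $\mathrm{DE3}(n)$ denotes the number of partitions of $n$ in which no even part is repeated and the largest part is odd and appears exactly once. In both cases the empty partition is not counted, so $\mathrm{DE1}(0)=\mathrm{DE3}(0)=0$. *)

From mathcomp Require Import all_boot.
Set Implicit Arguments. Unset Strict Implicit. Unset Printing Implicit Defensive.

(* A partition of n is encoded by its multiplicity function:
   m : {ffun 'I_n.+1 -> 'I_n.+1}, where m i is the number of parts equal to i
   (the entry at index 0 is required to be 0), and \sum_i i * m i = n. *)
Definition mult_part (n : nat) := {ffun 'I_n.+1 -> 'I_n.+1}.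

Definition is_partition (n : nat) (m : mult_part n) : bool :=
  (m ord0 == 0 :> nat) && (\sum_(i < n.+1) i * m i == n).

Definition no_even_repeated (n : nat) (m : mult_part n) : bool :=
  [forall i : 'I_n.+1, ~~ odd i ==> (m i <= 1)].

Definition largest_part_is (n : nat) (m : mult_part n) (i : 'I_n.+1) : bool :=
  (0 < m i) && [forall j : 'I_n.+1, (i < j) ==> (m j == 0 :> nat)].

Definition largest_odd (n : nat) (m : mult_part n) : bool :=
  [exists i : 'I_n.+1, largest_part_is m i && odd i].

Definition largest_odd_once (n : nat) (m : mult_part n) : bool :=
  [exists i : 'I_n.+1, [&& largest_part_is m i, odd i & (m i == 1 :> nat)]].

Definition DE1 (n : nat) : nat :=
  #|[set m : mult_part n | [&& is_partition m, no_even_repeated m & largest_odd m]]|.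

Definition DE3 (n : nat) : nat :=
  #|[set m : mult_part n | [&& is_partition m, no_even_repeated m & largest_odd_once m]]|.

From mathcomp Require Import all_boot zify.
From Stdlib Require Import FunctionalExtensionality.
Set Implicit Arguments. Unset Strict Implicit. Unset Printing Implicit Defensive.

(* Let B(N) be the partitions of N with no even part repeated, with largest part L.
   An even largest part is simple, and lowering it by one is a bijection from the
   partitions in B(N+1) with L even onto those counted by DE1(N); hence the right-hand
   side is #|B(n)|.  Let K be the largest odd number <= L, i.e. K = L or L - 1.  If K
   occurs, raising one copy of K to K + 2 gives a partition counted by DE3(n+2), and
   every such partition arises so (lower its simple top part by 2).  If K does not
   occur, L is even and simple, and lowering it to L - 1 gives a partition counted by
   DE3(n-1), with inverse "raise the top part by one". *)

Definition vanish_above N (f : nat -> nat) := forall i, N < i -> f i = 0.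
Definition bounded_by N (f : nat -> nat) := forall i, f i <= N.

Definition mult_of N (m : mult_part N) : nat -> nat :=
  fun i => if i < N.+1 then m (inord i) : nat else 0.

Definition mult_part_of N (f : nat -> nat) : mult_part N :=
  [ffun j : 'I_N.+1 => inord (f j)].

Definition card_mult N (P : (nat -> nat) -> bool) :=
  #|[set m : mult_part N | P (mult_of m)]|.

Lemma mult_ofE N (m : mult_part N) (i : 'I_N.+1) : mult_of m i = m i.
Proof. by rewrite /mult_of ltn_ord inord_val. Qed.

Lemma mult_of_vanish N (m : mult_part N) : vanish_above N (mult_of m).
Proof. by move=> i Ni; rewrite /mult_of ltnS leqNgt Ni. Qed.

Lemma mult_ofK N : cancel (@mult_of N) (@mult_part_of N).
Proof.
by move=> m; apply/ffunP => j; rewrite ffunE; apply: val_inj; rewrite /= mult_ofE inordK.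
Qed.

Lemma mult_part_ofK M g :
  vanish_above M g -> bounded_by M g -> mult_of (mult_part_of M g) = g.
Proof.
move=> gM gb; apply: functional_extensionality => i; rewrite /mult_of.
case: ifP => iM; last by rewrite gM // ltnNge -ltnS iM.
by rewrite ffunE /= !inordK // ltnS gb.
Qed.

Lemma card_in_bij (T U : finType) (A : {set T}) (B : {set U}) (f : T -> U) (g : U -> T) :
  {in A, forall x, f x \in B} -> {in B, forall y, g y \in A} ->
  {in A, cancel f g} -> {in B, cancel g f} -> #|A| = #|B|.
Proof.
move=> fAB gBA fK gK; rewrite -(card_in_imset (can_in_inj fK)).
apply: eq_card => y; apply/imsetP/idP => [[x xA ->]|yB]; first exact: fAB.
by exists (g y); rewrite ?gK ?gBA.
Qed.

Lemma card_mult_transport N M (PA PB : (nat -> nat) -> bool) F G :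
  (forall f, vanish_above N f -> PA f ->
     [/\ vanish_above M (F f), bounded_by M (F f), PB (F f) & G (F f) = f]) ->
  (forall g, vanish_above M g -> PB g ->
     [/\ vanish_above N (G g), bounded_by N (G g), PA (G g) & F (G g) = g]) ->
  card_mult N PA = card_mult M PB.
Proof.
move=> hF hG; apply: (card_in_bij (f := fun m => mult_part_of M (F (mult_of m)))
                                  (g := fun m => mult_part_of N (G (mult_of m)))) => m.
- rewrite !inE => Pm; have [FM Fb PF _] := hF _ (mult_of_vanish m) Pm.
  by rewrite mult_part_ofK.
- rewrite !inE => Pm; have [GN Gb PG _] := hG _ (mult_of_vanish m) Pm.
  by rewrite mult_part_ofK.
- rewrite !inE => Pm; have [FM Fb _ FK] := hF _ (mult_of_vanish m) Pm.
  by rewrite mult_part_ofK // FK mult_ofK.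
- rewrite !inE => Pm; have [GN Gb _ GK] := hG _ (mult_of_vanish m) Pm.
  by rewrite mult_part_ofK // GK mult_ofK.
Qed.

Lemma card_mult_split N (P Q : (nat -> nat) -> bool) :
  card_mult N (fun f => P f && Q f) + card_mult N (fun f => P f && ~~ Q f)
  = card_mult N P.
Proof.
rewrite /card_mult -(cardsID [set m | Q (mult_of m)] [set m | P (mult_of m)]).
by congr (_ + _); apply: eq_card => m; rewrite !inE // andbC.
Qed.

Definition weight R (f : nat -> nat) := \sum_(i < R.+1) i * f i.

Lemma weight_widen K R f : vanish_above K f -> K <= R -> weight R f = weight K f.
Proof.
move=> fK KR; rewrite /weight -!(big_mkord xpredT (fun i => i * f i)).
rewrite (big_cat_nat _ (n := K.+1)) //= -[RHS]addn0; congr (_ + _).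
by rewrite big_nat_cond big1 // => i /andP[/andP[Ki _] _]; rewrite fK ?muln0.
Qed.

Lemma weight_add_delta R g b :
  b <= R -> weight R (fun i => g i + (i == b)) = weight R g + b.
Proof.
move=> bR; rewrite /weight (eq_bigr (fun i : 'I_R.+1 => i * g i + i * (i == b :> nat)));
  last by move=> i _; rewrite mulnDr.
rewrite big_split /=; congr (_ + _).
rewrite (bigD1 (Ordinal (bR : b < R.+1))) //= eqxx muln1 big1 ?addn0 // => i ib.
by rewrite (negbTE (ib : (i : nat) != b)) muln0.
Qed.

(* One part a becomes a part b; meaningful only when 0 < f a (truncated subtraction). *)
Definition move_part a b (f : nat -> nat) i := f i - (i == a) + (i == b).

Lemma move_part_weight R f a b : a <= R -> b <= R -> 0 < f a ->
  weight R (move_part a b f) + a = weight R f + b.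
Proof.
move=> aR bR fa.
have -> : weight R f = weight R (fun i => (f i - (i == a)) + (i == a)).
  by apply: eq_bigr => i _; case: eqP => [->|_]; rewrite ?subnK ?subn0 ?addn0.
by rewrite /move_part !weight_add_delta // addnAC.
Qed.

Lemma move_partK f a b : 0 < f a -> move_part b a (move_part a b f) = f.
Proof.
move=> fa; apply: functional_extensionality => i; rewrite /move_part.
by case: eqP => [->|_]; case: eqP => _ /=; lia.
Qed.

Lemma move_part_other a b f i : i != a -> i != b -> move_part a b f i = f i.
Proof. by move=> /negbTE ia /negbTE ib; rewrite /move_part ia ib subn0 addn0. Qed.

Lemma move_part_src a b f : a != b -> move_part a b f a = f a - 1.
Proof. by move=> /negbTE ab; rewrite /move_part eqxx ab addn0. Qed.

Lemma move_part_dst a b f : a != b -> move_part a b f b = f b + 1.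
Proof. by move=> ab; rewrite /move_part eqxx eq_sym (negbTE ab) subn0. Qed.

Lemma move_part_vanish R f a b :
  vanish_above R f -> b <= R -> vanish_above R (move_part a b f).
Proof.
move=> fR bR i Ri; rewrite /move_part fR //.
by have -> : (i == b) = false by lia.
Qed.

Definition largest_part N (f : nat -> nat) := \max_(i < N.+1 | 0 < f i) i.

Lemma largest_part_le N f : largest_part N f <= N.
Proof. by apply/bigmax_leqP => i _; rewrite -ltnS. Qed.

Lemma largest_part_ge N f i : vanish_above N f -> 0 < f i -> i <= largest_part N f.
Proof.
move=> fN fi; have iN : i < N.+1 by rewrite ltnNge; apply: contraTN fi => /fN ->.
exact: (leq_bigmax_cond (Ordinal iN)).
Qed.

Lemma largest_part_le_of N f k : vanish_above k f -> largest_part N f <= k.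
Proof.
by move=> fk; apply/bigmax_leqP => i; apply: contraTT; rewrite -ltnNge => /fk ->.
Qed.

Lemma vanish_above_largest_part N f : vanish_above N f -> vanish_above (largest_part N f) f.
Proof.
by move=> fN j Lj; case: (posnP (f j)) => // /(largest_part_ge fN); lia.
Qed.

Lemma largest_part_eq N f L :
  vanish_above N f -> 0 < f L -> vanish_above L f -> largest_part N f = L.
Proof.
by move=> fN fL fL'; apply/eqP; rewrite eqn_leq largest_part_le_of // largest_part_ge.
Qed.

Lemma mult_largest_part_gt0 N f i :
  vanish_above N f -> 0 < f i -> 0 < f (largest_part N f).
Proof.
move=> fN fi; have iN : i < N.+1 by rewrite ltnNge; apply: contraTN fi => /fN ->.
have [|k fk e] := @eq_bigmax_cond _ (fun k : 'I_N.+1 => 0 < f k) (fun k => k : nat).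
  by apply/card_gt0P; exists (Ordinal iN).
by have -> : largest_part N f = k by exact: e.
Qed.

Lemma largest_part_raise M f L a b : vanish_above L f -> vanish_above M (move_part a b f) ->
  0 < f a -> L < b -> largest_part M (move_part a b f) = b.
Proof.
move=> fL hM fa Lb; have aL : a <= L by rewrite leqNgt; apply: contraTN fa => /fL ->.
apply: largest_part_eq => //; first by rewrite move_part_dst; lia.
by move=> j bj; rewrite move_part_other ?fL; lia.
Qed.

Lemma largest_part_lower M f L b : vanish_above L f -> vanish_above M (move_part L b f) ->
  f L = 1 -> b < L -> b <= largest_part M (move_part L b f) <= L.-1.
Proof.
move=> fL hM fL1 bL; have Lb : L != b by lia.
rewrite largest_part_ge ?move_part_dst ?addn1 //=.
apply: largest_part_le_of => j Lj; have [->|jL] := eqVneq j L.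
  by rewrite move_part_src ?fL1 //; lia.
by rewrite move_part_other ?fL //; lia.
Qed.

Lemma largest_part_lower_pred M f L :
  vanish_above L f -> vanish_above M (move_part L L.-1 f) ->
  f L = 1 -> 0 < L -> largest_part M (move_part L L.-1 f) = L.-1.
Proof.
move=> fL hM fL1 L0; apply/eqP; rewrite eqn_leq andbC.
by apply: largest_part_lower => //; rewrite prednK.
Qed.

Lemma odd_pred n : 0 < n -> odd n.-1 = ~~ odd n.
Proof. by case: n => //= n _; rewrite negbK. Qed.

Definition odd_floor L := if odd L then L else L.-1.

Lemma odd_floor_odd L : 0 < L -> odd (odd_floor L).
Proof. by rewrite /odd_floor; case: L => // L _; case: ifP => // /negbT /=; rewrite negbK. Qed.

Lemma odd_floor_bounds L : odd_floor L <= L <= (odd_floor L).+1.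
Proof. by rewrite /odd_floor; case: ifP => _; lia. Qed.

Lemma odd_floor_eq k L : odd k -> k <= L <= k.+1 -> odd_floor L = k.
Proof.
move=> ok kLk; have [->|->] : L = k \/ L = k.+1 by lia.
  by rewrite /odd_floor ok.
by rewrite /odd_floor /= ok.
Qed.

Definition is_part N f := (f 0 == 0) && (weight N f == N).
Definition even_parts_simple N (f : nat -> nat) :=
  [forall i : 'I_N.+1, ~~ odd i ==> (f i <= 1)].
Definition de_part N f := is_part N f && even_parts_simple N f.

Lemma de_partP N f : vanish_above N f ->
  de_part N f <-> [/\ f 0 = 0, weight N f = N & forall i, ~~ odd i -> f i <= 1].
Proof.
move=> fN; split.
- case/andP => /andP[/eqP f0 /eqP wf] /forallP ev; split=> // i oi.
  case: (leqP i N) => iN; last by rewrite fN.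
  by have := ev (Ordinal (iN : i < N.+1)); rewrite /= oi.
- case=> f0 wf ev; rewrite /de_part /is_part f0 wf !eqxx /=.
  by apply/forallP => i; apply/implyP; apply: ev.
Qed.

Lemma de_part_of_weight N R h : vanish_above R h -> h 0 = 0 -> weight R h = N ->
  (forall i, ~~ odd i -> h i <= 1) -> [/\ vanish_above N h, bounded_by N h & de_part N h].
Proof.
move=> hR h0 wh ev.
have part_le : forall i, i * h i <= N.
  move=> i; case: (leqP i R) => iR; last by rewrite hR ?muln0.
  by rewrite -wh /weight (bigD1 (Ordinal (iR : i < R.+1))) //= leq_addr.
have hN : vanish_above N h.
  by move=> i Ni; have := part_le i; case: (posnP (h i)) => // hi; nia.
split=> //.
  by case=> [|i]; [rewrite h0 | have := part_le i.+1; nia].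
apply/de_partP => //; split=> //; rewrite -[RHS]wh.
have [NR|RN] := leqP N R; first by rewrite (weight_widen hN NR).
exact: weight_widen hR (ltnW RN).
Qed.

Lemma de_part_move N M f a b : vanish_above N f -> de_part N f -> 0 < f a -> 0 < b ->
  N + b = M + a -> (~~ odd b -> f b = 0) ->
  [/\ vanish_above M (move_part a b f), bounded_by M (move_part a b f)
    & de_part M (move_part a b f)].
Proof.
move=> fN /(de_partP fN)[f0 wf ev] fa b0 NbMa evb.
have aN : a <= N by rewrite leqNgt; apply: contraTN fa => /fN ->.
have a0 : 0 < a by case: a fa aN {NbMa} => //; rewrite f0.
apply: (@de_part_of_weight _ (N + M)).
- by apply: move_part_vanish; [move=> i Ni; apply: fN; lia | lia].
- by rewrite move_part_other ?f0 //; lia.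
- have : weight (N + M) (move_part a b f) + a = weight (N + M) f + b.
    by apply: move_part_weight => //; lia.
  rewrite (weight_widen fN (leq_addr M N)) wf; lia.
- move=> i oi; have [eib|ib] := eqVneq i b.
    by subst b; rewrite /move_part evb // sub0n eqxx.
  by rewrite /move_part (negbTE ib) addn0 (leq_trans (leq_subr _ _) (ev i oi)).
Qed.

Lemma de_part_largest_part N f : 0 < N -> vanish_above N f -> de_part N f ->
  [/\ 0 < largest_part N f, 0 < f (largest_part N f),
      vanish_above (largest_part N f) f
    & ~~ odd (largest_part N f) -> f (largest_part N f) = 1].
Proof.
move=> N0 fN /(de_partP fN)[f0 wf ev].
have [i fi] : exists i, 0 < f i.
  case: (pickP (fun i : 'I_N.+1 => 0 < f i)) => [i fi|none]; first by exists i.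
  move: wf N0; rewrite /weight big1 => [<- //|i _].
  by have := none i; rewrite lt0n => /negbFE/eqP ->; rewrite muln0.
have fL := mult_largest_part_gt0 fN fi.
split=> //; last by move=> /ev; lia.
- by case: (posnP (largest_part N f)) fL => // ->; rewrite f0.
- exact: vanish_above_largest_part.
Qed.

Definition raise_top N f := move_part (largest_part N f) (largest_part N f).+1 f.
Definition lower_top N f := move_part (largest_part N f) (largest_part N f).-1 f.

Lemma raise_top_spec N f : 0 < N -> vanish_above N f -> de_part N f ->
  [/\ vanish_above N.+1 (raise_top N f), bounded_by N.+1 (raise_top N f),
      de_part N.+1 (raise_top N f),
      largest_part N.+1 (raise_top N f) = (largest_part N f).+1
    & lower_top N.+1 (raise_top N f) = f].
Proof.
move=> N0 fN df; have [_ fL fL_top _] := de_part_largest_part N0 fN df.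
rewrite /raise_top; set L := largest_part N f in fL fL_top *.
have [hN hb dh] := de_part_move fN df fL (ltn0Sn L) (esym (addSnnS N L))
                     (fun _ => fL_top _ (ltnSn L)).
have lph : largest_part N.+1 (move_part L L.+1 f) = L.+1.
  exact: largest_part_raise fL_top hN fL (ltnSn L).
by split=> //; rewrite /lower_top lph move_partK.
Qed.

Lemma lower_top_spec N f : vanish_above N.+1 f -> de_part N.+1 f ->
  ~~ odd (largest_part N.+1 f) ->
  [/\ vanish_above N (lower_top N.+1 f), bounded_by N (lower_top N.+1 f),
      de_part N (lower_top N.+1 f),
      largest_part N (lower_top N.+1 f) = (largest_part N.+1 f).-1
    & raise_top N (lower_top N.+1 f) = f].
Proof.
move=> fN df evL.
have [L0 fL fL_top /(_ evL) fL1] := de_part_largest_part (ltn0Sn N) fN df.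
rewrite /lower_top; set L := largest_part N.+1 f in L0 fL fL_top evL fL1 *.
have oL : odd L.-1 by rewrite odd_pred.
have [hN hb dh] : [/\ vanish_above N (move_part L L.-1 f), bounded_by N (move_part L L.-1 f)
                    & de_part N (move_part L L.-1 f)].
  by apply: (de_part_move fN df fL); [exact: odd_gt0 oL | lia | rewrite oL].
have lph := largest_part_lower_pred fL_top hN fL1 L0.
by split=> //; rewrite /raise_top lph prednK // move_partK.
Qed.

Definition lower_top2 N f := move_part (largest_part N f) (largest_part N f).-2 f.
Definition raise_odd_floor N f :=
  move_part (odd_floor (largest_part N f)) (odd_floor (largest_part N f)).+2 f.

Definition de1 N f := de_part N f && odd (largest_part N f).
Definition de3 N f :=
  de_part N f && (odd (largest_part N f) && (f (largest_part N f) == 1)).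
Definition top_odd_occurs N f := 0 < f (odd_floor (largest_part N f)).

Lemma de_partE N (m : mult_part N) :
  is_partition m && no_even_repeated m = de_part N (mult_of m).
Proof.
congr (_ && _); last by apply: eq_forallb => i; rewrite mult_ofE.
rewrite /is_partition /is_part /weight -(mult_ofE m ord0); congr (_ && (_ == _)).
by apply: eq_bigr => i _; rewrite mult_ofE.
Qed.

Lemma exists_largest_part_is N (m : mult_part N) (P : nat -> bool) :
  0 < N -> de_part N (mult_of m) ->
  [exists i, largest_part_is m i && P i] = P (largest_part N (mult_of m)).
Proof.
move=> N0 dm; have [_ mL mL_top _] := de_part_largest_part N0 (mult_of_vanish m) dm.
have LN : largest_part N (mult_of m) < N.+1 by rewrite ltnS largest_part_le.
apply/existsP/idP => [[i /andP[/andP[mi /forallP top] Pi]] | PL].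
- suff -> : largest_part N (mult_of m) = i by [].
  apply: largest_part_eq; [exact: mult_of_vanish | by rewrite mult_ofE |].
  move=> j ij; case: (leqP j N) => jN; last by rewrite mult_of_vanish.
  have /implyP/(_ ij)/eqP := top (Ordinal (jN : j < N.+1)).
  by rewrite -[j]/(Ordinal (jN : j < N.+1) : nat) mult_ofE.
- exists (inord (largest_part N (mult_of m))).
  rewrite /largest_part_is -mult_ofE inordK // mL PL andbT.
  by apply/forallP => j; apply/implyP => Lj; rewrite -mult_ofE mL_top.
Qed.

Lemma DE1_card_mult N : 0 < N -> DE1 N = card_mult N (de1 N).
Proof.
move=> N0; apply: eq_card => m; rewrite !inE andbA de_partE /de1.
by case: (boolP (de_part N _)) => //= dm; apply: (exists_largest_part_is odd).
Qed.

Lemma DE3_card_mult N : 0 < N -> DE3 N = card_mult N (de3 N).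
Proof.
move=> N0; apply: eq_card => m; rewrite !inE andbA de_partE /de3.
case: (boolP (de_part N _)) => //= dm.
rewrite -(exists_largest_part_is (fun k => odd k && (mult_of m k == 1))) //.
by apply: eq_existsb => i; rewrite mult_ofE.
Qed.

Lemma card_de1 N : 0 < N ->
  card_mult N (de1 N)
  = card_mult N.+1 (fun f => de_part N.+1 f && ~~ odd (largest_part N.+1 f)).
Proof.
move=> N0; apply: (card_mult_transport (F := raise_top N) (G := lower_top N.+1)).
- move=> f fN /andP[df oL].
  have [hN hb dh lph hK] := raise_top_spec N0 fN df.
  by split=> //; rewrite dh lph /= oL.
- move=> g gN /andP[dg evL].
  have [L0 _ _ _] := de_part_largest_part (ltn0Sn N) gN dg.
  have [hN hb dh lph hK] := lower_top_spec gN dg evL.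
  by split=> //; rewrite /de1 dh lph odd_pred.
Qed.

Lemma card_de3_no_top_odd N : 0 < N ->
  card_mult N (de3 N)
  = card_mult N.+1 (fun f => de_part N.+1 f && ~~ top_odd_occurs N.+1 f).
Proof.
move=> N0; apply: (card_mult_transport (F := raise_top N) (G := lower_top N.+1)).
- move=> f fN /andP[df /andP[oL /eqP fL1]].
  have [hN hb dh lph hK] := raise_top_spec N0 fN df.
  split=> //; rewrite dh /top_odd_occurs lph (odd_floor_eq oL) ?leqnSn ?leqnn //.
  by rewrite /raise_top move_part_src ?fL1 //; lia.
- move=> g gN /andP[dg ntop].
  have [L0 gL _ _] := de_part_largest_part (ltn0Sn N) gN dg.
  have evL : ~~ odd (largest_part N.+1 g).
    by apply: contra ntop => oL; rewrite /top_odd_occurs /odd_floor oL.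
  have [hN hb dh lph hK] := lower_top_spec gN dg evL.
  split=> //; rewrite /de3 dh lph odd_pred //= evL /=.
  move: ntop; rewrite /top_odd_occurs /odd_floor (negbTE evL) -leqNgt leqn0 => /eqP gL1.
  by rewrite /lower_top move_part_dst ?gL1 //; lia.
Qed.

Lemma de3_largest_part_gt1 N f :
  vanish_above N.+2 f -> de3 N.+2 f -> 1 < largest_part N.+2 f.
Proof.
move=> fN /andP[df /andP[oL /eqP fL1]].
have [L0 _ fL_top _] := de_part_largest_part (ltn0Sn N.+1) fN df.
rewrite ltn_neqAle L0 andbT; apply/eqP => L1; rewrite -L1 in fL_top fL1.
have [f0 wf _] := (de_partP fN).1 df.
move: wf; rewrite (weight_widen fL_top (isT : 1 <= N.+2)).
by rewrite /weight !big_ord_recr big_ord0 /= f0 fL1.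
Qed.

Lemma lower_top2_spec N f : vanish_above N.+2 f -> de3 N.+2 f ->
  [/\ vanish_above N (lower_top2 N.+2 f), bounded_by N (lower_top2 N.+2 f),
      de_part N (lower_top2 N.+2 f), top_odd_occurs N (lower_top2 N.+2 f)
    & raise_odd_floor N (lower_top2 N.+2 f) = f].
Proof.
move=> fN d3f; have L1 := de3_largest_part_gt1 fN d3f.
case/andP: d3f => df /andP[oL /eqP fL1].
have [_ fL fL_top _] := de_part_largest_part (ltn0Sn N.+1) fN df.
rewrite /lower_top2; set L := largest_part N.+2 f in L1 oL fL1 fL fL_top *.
have oL2 : odd L.-2 by rewrite -subn2 oddB ?addbF //; lia.
have [hN hb dh] : [/\ vanish_above N (move_part L L.-2 f), bounded_by N (move_part L L.-2 f)
                    & de_part N (move_part L L.-2 f)].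
  by apply: (de_part_move fN df fL); [exact: odd_gt0 oL2 | lia | rewrite oL2].
have top : odd_floor (largest_part N (move_part L L.-2 f)) = L.-2.
  apply: odd_floor_eq => //.
  have : L.-2 <= largest_part N (move_part L L.-2 f) <= L.-1.
    by apply: largest_part_lower => //; lia.
  lia.
split=> //; first by rewrite /top_odd_occurs top move_part_dst //; lia.
by rewrite /raise_odd_floor top (_ : L.-2.+2 = L) ?move_partK //; lia.
Qed.

Lemma raise_odd_floor_spec N f : 0 < N -> vanish_above N f -> de_part N f ->
  top_odd_occurs N f ->
  [/\ vanish_above N.+2 (raise_odd_floor N f), bounded_by N.+2 (raise_odd_floor N f),
      de3 N.+2 (raise_odd_floor N f) & lower_top2 N.+2 (raise_odd_floor N f) = f].
Proof.
move=> N0 fN df; have [L0 _ fL_top _] := de_part_largest_part N0 fN df.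
rewrite /top_odd_occurs /raise_odd_floor.
have := odd_floor_bounds (largest_part N f); have := odd_floor_odd L0.
set L := largest_part N f in L0 fL_top *; set K := odd_floor L => oK KLK fK.
have oK2 : odd K.+2 by rewrite /= !negbK.
have [hN hb dh] : [/\ vanish_above N.+2 (move_part K K.+2 f),
                    bounded_by N.+2 (move_part K K.+2 f) & de_part N.+2 (move_part K K.+2 f)].
  by apply: (de_part_move fN df fK) => //; [lia | rewrite oK2].
have lph : largest_part N.+2 (move_part K K.+2 f) = K.+2.
  by apply: largest_part_raise fL_top hN fK _; lia.
split=> //; last by rewrite /lower_top2 lph move_partK.
by rewrite /de3 dh lph oK2 move_part_dst ?fL_top //; lia.
Qed.

Lemma card_de3_top_odd N : 0 < N ->
  card_mult N.+2 (de3 N.+2) = card_mult N (fun f => de_part N f && top_odd_occurs N f).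
Proof.
move=> N0; apply: (card_mult_transport (F := lower_top2 N.+2) (G := raise_odd_floor N)).
- by move=> f fN d3f; have [hN hb dh top hK] := lower_top2_spec fN d3f; rewrite dh top.
- by move=> g gN /andP[dg top]; apply: raise_odd_floor_spec.
Qed.

Theorem corollary4 (n : nat) (hn : 1 < n) :
  DE3 (n + 2) + DE3 (n - 1) = DE1 n + DE1 (n - 1).
Proof.
case: n hn => [//|N]; rewrite ltnS => N0.
rewrite addn2 subn1 /= !DE3_card_mult ?DE1_card_mult //.
rewrite card_de3_top_odd // (card_de3_no_top_odd N0) (card_de1 N0).
rewrite card_mult_split.
by rewrite -(card_mult_split _ (de_part N.+1) (fun f => odd (largest_part N.+1 f))).
Qed.
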